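(* Let $X_1,X_2$ be sets, $H_1$ a group acting transitively on $X_1$, $H_2$ an abelian group (written additively) acting on $X_2$, and $H_2'$ a subgroup of $H_2$. Put $X_2'=\{y\in X_2 : \text{for } g\in H_2,\ g\cdot y=y \iff g\in H_2'\}$ and $X=X_1\times X_2'$. Let $\varGamma_1:H_1\times X\to X$, $\varGamma_1(g,(x_1,x_2))=(g\cdot x_1,x_2)$. Let $\varphi:H_2\times X_1\times X_2'\to X_1$ be a map with $\varphi(0,x_1,x_2)=x_1$ and $\varphi(g+h,x_1,x_2)=\varphi(h,\varphi(g,x_1,x_2),g\cdot x_2)$ for all $g,h\in H_2$, and define the action $\varGamma_2:H_2\times X\to X$, $\varGamma_2(g,(x_1,x_2))=(\varphi(g,x_1,x_2),g\cdot x_2)$. Let $G_1=\rho_{\varGamma_1}(H_1)$, $G_2=\rho_{\varGamma_2}(H_2)\subset\mathfrak S(X)$ and assume every element of $G_1$ commutes with every element of $G_2$. Let $x=(x_1^0,x_2^0)\in X$. Then there is a bijection between $G_1\cdot[x]_{G_2}\subset G_2\backslash X$ and the orbit set $H_2'\backslash X_1$ of the action of $H_2'$ on $X_1$ given by $g\cdot y=\varphi(g,y,x_2^0)$, and this bijection commutes with the action of $G_1$ (equivalently of $H_1$), where $H_1$ acts on $G_2\backslash X$ by $h\cdot[z]_{G_2}=[\varGamma_1(h,z)]_{G_2}$ and on $H_2'\backslash X_1$ by $h\cdot[y]=[h\cdot y]$.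
   Context: $\mathfrak S(X)$ is the group of bijections of $X$; for an action $\varGamma$ of a group $K$ on $X$, $\rho_\varGamma:K\to\mathfrak S(X)$ is its permutation representation, $\rho_\varGamma(k)(x)=\varGamma(k,x)$. For a group $K$ acting on $Y$, $K\backslash Y$ is the set of orbits and $[y]_K$ the orbit of $y$. Since $H_2'$ fixes $x_2^0$, the formula $g\cdot y=\varphi(g,y,x_2^0)$ ($g\in H_2'$) defines an action of $H_2'$ on $X_1$, and the $H_1$ action on $H_2'\backslash X_1$ is well defined because $G_1$ and $G_2$ commute. *)

(* groups may be infinite, so carriers and operations are explicit. *)
From Stdlib Require Import Classical FunctionalExtensionality PropExtensionality.

Definition is_group {G : Type} (mul : G -> G -> G) (e : G) (inv : G -> G) : Prop :=
  (forall a b c, mul a (mul b c) = mul (mul a b) c) /\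
  (forall a, mul e a = a /\ mul a e = a) /\
  (forall a, mul (inv a) a = e /\ mul a (inv a) = e).

Definition is_abelian_group {G : Type} (add : G -> G -> G) (zero : G) (opp : G -> G) : Prop :=
  is_group add zero opp /\ (forall a b, add a b = add b a).

Definition is_subgroup {G : Type} (mul : G -> G -> G) (e : G) (inv : G -> G)
  (P : G -> Prop) : Prop :=
  P e /\ (forall a b, P a -> P b -> P (mul a b)) /\ (forall a, P a -> P (inv a)).

Definition is_action {G X : Type} (mul : G -> G -> G) (e : G) (act : G -> X -> X) : Prop :=
  (forall x, act e x = x) /\ (forall a b x, act (mul a b) x = act a (act b x)).

Definition transitive_action {G X : Type} (act : G -> X -> X) : Prop :=
  forall x y : X, exists g, act g x = y.

Definition X2' {H2 X2 : Type} (act2 : H2 -> X2 -> X2) (P : H2 -> Prop) (y : X2) : Prop :=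
  forall g, act2 g y = y <-> P g.

(* X = X1 x X2' as a predicate on X1 * X2 *)
Definition inX {X1 H2 X2 : Type} (act2 : H2 -> X2 -> X2) (P : H2 -> Prop)
  (z : X1 * X2) : Prop := X2' act2 P (snd z).

Definition Gamma1 {H1 X1 X2 : Type} (act1 : H1 -> X1 -> X1) (h : H1) (z : X1 * X2)
  : X1 * X2 := (act1 h (fst z), snd z).

Definition Gamma2 {H2 X1 X2 : Type} (act2 : H2 -> X2 -> X2) (phi : H2 -> X1 -> X2 -> X1)
  (g : H2) (z : X1 * X2) : X1 * X2 := (phi g (fst z) (snd z), act2 g (snd z)).

Definition orbit2 {H2 X1 X2 : Type} (act2 : H2 -> X2 -> X2) (phi : H2 -> X1 -> X2 -> X1)
  (z : X1 * X2) : X1 * X2 -> Prop :=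
  fun w => exists g, w = Gamma2 act2 phi g z.

Definition orbit' {H2 X1 X2 : Type} (phi : H2 -> X1 -> X2 -> X1) (P : H2 -> Prop)
  (x20 : X2) (y : X1) : X1 -> Prop :=
  fun y' => exists g, P g /\ y' = phi g y x20.

From Stdlib Require Import FunctionalExtensionality PropExtensionality ProofIrrelevance.

(* The bijection G_1.[x]_{G_2} -> H_2' \ X_1 sends a G_2-orbit S to its slice
   { b | (b, x_2^0) \in S } over the fibre of x_2^0.

   1. Abelian group actions: the stabiliser of a point is constant along its
      orbit, hence X_2' is H_2-stable.
   2. On X = X_1 x X_2', Gamma_2 is an action of H_2 (from the cocycle laws of
      phi), so its orbits are stable under Gamma_2 and partition X.
   3. For x_2^0 in X_2', the slice of the G_2-orbit of (b, x_2^0) is the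
      H_2'-orbit of b, and two such G_2-orbits coincide iff their slices do;
      this gives injectivity, and transitivity of H_1 gives surjectivity.
   4. Since G_1 and G_2 commute, the H_1-action on G_2-orbits is well defined,
      which yields the equivariance of the slice map. *)

Lemma action_inv_cancel {G X : Type} (mul : G -> G -> G) (e : G) (inv : G -> G)
  (act : G -> X -> X) :
  is_group mul e inv -> is_action mul e act ->
  forall g u, act (inv g) (act g u) = u.
Proof.
  intros [_ [_ Hinv]] [Hact_e Hact_mul] g u.
  now rewrite <- Hact_mul, (proj1 (Hinv g)), Hact_e.
Qed.

Lemma abelian_stabilizer_translate {G X : Type} (add : G -> G -> G) (zero : G)
  (opp : G -> G) (act : G -> X -> X) :
  is_abelian_group add zero opp -> is_action add zero act ->
  forall g k y, act g (act k y) = act k y <-> act g y = y.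
Proof.
  intros HG Hact g k y.
  pose proof (action_inv_cancel add zero opp act (proj1 HG) Hact) as Hcancel.
  destruct Hact as [_ Hact_add].
  rewrite <- Hact_add, (proj2 HG), Hact_add.
  split; intro E.
  - now rewrite <- (Hcancel k (act g y)), E, Hcancel.
  - now rewrite E.
Qed.

Definition slice {X1 X2 : Type} (x2 : X2) (S : X1 * X2 -> Prop) : X1 -> Prop :=
  fun b => S (b, x2).

Section Gamma2Orbits.

Context {X1 X2 H2 : Type}.
Context {add2 : H2 -> H2 -> H2} {zero2 : H2} {opp2 : H2 -> H2}.
Context {act2 : H2 -> X2 -> X2} {P : H2 -> Prop} {phi : H2 -> X1 -> X2 -> X1}.

Hypothesis HG2 : is_abelian_group add2 zero2 opp2.
Hypothesis Hact2 : is_action add2 zero2 act2.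
Hypothesis Hphi0 : forall x1 x2, X2' act2 P x2 -> phi zero2 x1 x2 = x1.
Hypothesis HphiD : forall g h x1 x2, X2' act2 P x2 ->
  phi (add2 g h) x1 x2 = phi h (phi g x1 x2) (act2 g x2).

Local Notation Gamma2 := (Gamma2 act2 phi).
Local Notation orbit2 := (orbit2 act2 phi).
Local Notation orbit' := (orbit' phi P).
Local Notation inX := (inX (X1 := X1) act2 P).

Lemma X2'_act2 g y : X2' act2 P y -> X2' act2 P (act2 g y).
Proof.
  intros Hy k. rewrite <- (Hy k).
  exact (abelian_stabilizer_translate add2 zero2 opp2 act2 HG2 Hact2 k g y).
Qed.

Lemma inX_Gamma2 g z : inX z -> inX (Gamma2 g z).
Proof. intro Hz. exact (X2'_act2 g (snd z) Hz). Qed.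

Lemma Gamma2_zero z : inX z -> Gamma2 zero2 z = z.
Proof.
  destruct z as [z1 z2]; intro Hz. unfold Gamma2; simpl.
  now rewrite Hphi0, (proj1 Hact2).
Qed.

Lemma Gamma2_add g k z : inX z -> Gamma2 k (Gamma2 g z) = Gamma2 (add2 g k) z.
Proof.
  destruct z as [z1 z2]; intro Hz. unfold Gamma2; simpl.
  now rewrite HphiD, (proj2 HG2), (proj2 Hact2).
Qed.

Lemma orbit2_refl z : inX z -> orbit2 z z.
Proof. intro Hz. exists zero2. now rewrite Gamma2_zero. Qed.

Lemma orbit2_Gamma2 g z : inX z -> orbit2 (Gamma2 g z) = orbit2 z.
Proof.
  intro Hz. destruct HG2 as [[_ [_ Hopp]] _].
  apply functional_extensionality; intro w; apply propositional_extensionality.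
  split; intros [k ->].
  - exists (add2 g k). now apply Gamma2_add.
  - exists (add2 (opp2 g) k).
    rewrite <- (Gamma2_add (opp2 g) k) by now apply inX_Gamma2.
    now rewrite (Gamma2_add g (opp2 g)), (proj2 (Hopp g)), Gamma2_zero.
Qed.

Lemma orbit2_eq_inv z w : inX w -> orbit2 z = orbit2 w ->
  inX z /\ exists g, w = Gamma2 g z.
Proof.
  intros Hw E.
  assert (Hwz : orbit2 z w) by (rewrite E; now apply orbit2_refl).
  destruct Hwz as [g Hg]. split; [|now exists g].
  destruct z as [z1 z2], w as [w1 w2]. injection Hg as _ E2.
  unfold inX; simpl in *.
  rewrite <- (action_inv_cancel add2 zero2 opp2 act2 (proj1 HG2) Hact2 g z2), <- E2.
  now apply X2'_act2.
Qed.

Section Fibre.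

Variable x20 : X2.
Hypothesis Hx20 : X2' act2 P x20.

(* Since x_2^0 lies in X_2', 0 is in H_2', so each point lies in its H_2'-orbit. *)
Lemma orbit'_refl y : orbit' x20 y y.
Proof. exists zero2. split; [apply (Hx20 zero2), (proj1 Hact2)|now rewrite Hphi0]. Qed.

Lemma Gamma2_fibre g b : P g -> Gamma2 g (b, x20) = (phi g b x20, x20).
Proof. intro Pg. unfold Gamma2; simpl. now rewrite (proj2 (Hx20 g) Pg). Qed.

Lemma slice_orbit2 b : slice x20 (orbit2 (b, x20)) = orbit' x20 b.
Proof.
  apply functional_extensionality; intro c; apply propositional_extensionality.
  unfold slice, orbit2, orbit'. split.
  - intros [g Hg]. unfold Gamma2 in Hg; simpl in Hg. injection Hg as Ec Ex.
    exists g. split; [apply (Hx20 g); now rewrite <- Ex|exact Ec].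
  - intros [g [Pg ->]]. exists g. now rewrite Gamma2_fibre.
Qed.

Lemma orbit2_eq_iff_orbit'_eq a b :
  orbit2 (a, x20) = orbit2 (b, x20) <-> orbit' x20 a = orbit' x20 b.
Proof.
  split; intro E.
  - now rewrite <- !slice_orbit2, E.
  - pose proof (orbit'_refl a) as Ha. rewrite E in Ha.
    destruct Ha as [g [Pg ->]].
    rewrite <- Gamma2_fibre by exact Pg.
    now apply orbit2_Gamma2.
Qed.

End Fibre.

Section Equivariance.

Context {H1 : Type} {act1 : H1 -> X1 -> X1}.
Hypothesis Hcomm : forall h g z, inX z ->
  Gamma1 act1 h (Gamma2 g z) = Gamma2 g (Gamma1 act1 h z).

(* The action h.[z]_{G_2} = [Gamma_1(h, z)]_{G_2} of H_1 on G_2-orbits is well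
   defined, because G_1 and G_2 commute. *)
Lemma orbit2_Gamma1 h z w : inX w -> orbit2 z = orbit2 w ->
  orbit2 (Gamma1 act1 h z) = orbit2 (Gamma1 act1 h w).
Proof.
  intros Hw E. destruct (orbit2_eq_inv z w Hw E) as [Hz [g ->]].
  rewrite Hcomm by exact Hz.
  symmetry. now apply orbit2_Gamma2.
Qed.

Lemma slice_orbit2_Gamma1 x20 (Hx20 : X2' act2 P x20) h z a y :
  orbit2 z = orbit2 (a, x20) ->
  slice x20 (orbit2 z) = orbit' x20 y ->
  slice x20 (orbit2 (Gamma1 act1 h z)) = orbit' x20 (act1 h y).
Proof.
  intros Ea Ey.
  rewrite Ea, slice_orbit2 in Ey by exact Hx20.
  apply (orbit2_eq_iff_orbit'_eq x20 Hx20) in Ey.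
  rewrite (orbit2_Gamma1 h z (y, x20)); [now apply slice_orbit2|exact Hx20|congruence].
Qed.

End Equivariance.

End Gamma2Orbits.

Theorem mainTheorem3
  (X1 X2 H1 H2 : Type)
  (mul1 : H1 -> H1 -> H1) (one1 : H1) (inv1 : H1 -> H1)
  (act1 : H1 -> X1 -> X1)
  (add2 : H2 -> H2 -> H2) (zero2 : H2) (opp2 : H2 -> H2)
  (act2 : H2 -> X2 -> X2)
  (P : H2 -> Prop)
  (phi : H2 -> X1 -> X2 -> X1)
  (HG1 : is_group mul1 one1 inv1)
  (Hact1 : is_action mul1 one1 act1)
  (Htrans : transitive_action act1)
  (HG2 : is_abelian_group add2 zero2 opp2)
  (Hact2 : is_action add2 zero2 act2)
  (HP : is_subgroup add2 zero2 opp2 P)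
  (Hphi0 : forall x1 x2, X2' act2 P x2 -> phi zero2 x1 x2 = x1)
  (HphiD : forall g h x1 x2, X2' act2 P x2 ->
     phi (add2 g h) x1 x2 = phi h (phi g x1 x2) (act2 g x2))
  (Hcomm : forall h g z, inX act2 P z ->
     Gamma1 act1 h (Gamma2 act2 phi g z) = Gamma2 act2 phi g (Gamma1 act1 h z))
  (x10 : X1) (x20 : X2) (Hx20 : X2' act2 P x20) :
  let x := (x10, x20) in
  exists f : { S : X1 * X2 -> Prop | exists h, S = orbit2 act2 phi (Gamma1 act1 h x) } ->
             { T : X1 -> Prop | exists y, T = orbit' phi P x20 y },
    (forall a b, f a = f b -> a = b) /\
    (forall c, exists a, f a = c) /\
    (forall S S' h z y,
       proj1_sig S = orbit2 act2 phi z ->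
       proj1_sig (f S) = orbit' phi P x20 y ->
       proj1_sig S' = orbit2 act2 phi (Gamma1 act1 h z) ->
       proj1_sig (f S') = orbit' phi P x20 (act1 h y)).
Proof.
  intro x.
  pose proof (slice_orbit2 (phi := phi) x20 Hx20) as Hslice.
  assert (Hrange : forall S : { S | exists h, S = orbit2 act2 phi (Gamma1 act1 h x) },
             exists y, slice x20 (proj1_sig S) = orbit' phi P x20 y).
  { intros [S [h ->]]. exists (act1 h x10). apply Hslice. }
  exists (fun S => exist _ (slice x20 (proj1_sig S)) (Hrange S)).
  split; [|split].
  - intros [S [h ->]] [S' [h' ->]] E. apply subset_eq_compat.
    apply (f_equal (@proj1_sig _ _)) in E. simpl in E. unfold Gamma1 in E; simpl in E.
    rewrite !Hslice in E.
    now apply (orbit2_eq_iff_orbit'_eq HG2 Hact2 Hphi0 HphiD x20 Hx20).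
  - intros [T [y ->]]. destruct (Htrans x10 y) as [h <-].
    exists (exist _ (orbit2 act2 phi (Gamma1 act1 h x)) (ex_intro _ h eq_refl)).
    apply subset_eq_compat. apply Hslice.
  - intros [S [h0 ->]] [S' HS'] h z y Ez Ey Eh. simpl in *. rewrite Eh.
    apply (slice_orbit2_Gamma1 HG2 Hact2 Hphi0 HphiD Hcomm x20 Hx20 h z (act1 h0 x10));
      now rewrite <- Ez.
Qed.
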